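(* Let $B$ be a finite set (of ''bath spins''), and introduce commuting indeterminates $b_{i,j}=b_{j,i}$ for distinct $i,j\in B$. For every subset $\mathcal S\subseteq B$ let $L_{\mathcal S}$ be a formal power series in the variables $\{b_{i,j}: i,j\in\mathcal S,\ i\neq j\}$ (with complex coefficients, which may depend on additional parameters such as a time $t$) whose constant term is nonzero. Define $\tilde L_{\mathcal S}$ recursively for all $\mathcal S\subseteq B$ by $\tilde L_{\mathcal S}=L_{\mathcal S}/\prod_{\mathcal C\subsetneq \mathcal S}\tilde L_{\mathcal C}$. Suppose that for every $\mathcal S\subseteq B$ and all subsets $\mathcal X,\mathcal Y\subseteq\mathcal S$ with $\mathcal X\cup\mathcal Y=\mathcal S$ and $\mathcal X\cap\mathcal Y=\emptyset$, setting $b_{i,j}=0$ for all $i\in\mathcal X$, $j\in\mathcal Y$ in $L_{\mathcal S}$ yields $L_{\mathcal X}L_{\mathcal Y}$. Then for every $\mathcal C\subseteq B$ with $k=|\mathcal C|\ge 1$, $\tilde L_{\mathcal C}$ equals a constant plus terms of total degree at least $k-1$ in the variables $b_{i,j}$; that is, $\tilde L_{\mathcal C}=\mathrm{const}+O(b_{i,j}^{k-1})$ (in the paper's physical setting where each $b_{i,j}$ is accompanied by a factor of time $t$, $\tilde L_{\mathcal C}=\mathrm{const}+O(b_{i,j}^{k-1}t^{k-1})$).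
   Context: Quotients and products are in the ring of formal power series; they are well defined since all constant terms are nonzero. The hypothesis on setting cross couplings to zero is called ''factorable under disconnected interactions''. *)

From HB Require Import structures.
From mathcomp Require Import all_boot all_order all_algebra.
From mathcomp Require Import complex.
From mathcomp Require Import Rstruct.
Set Implicit Arguments. Unset Strict Implicit. Unset Printing Implicit Defensive.
Import Order.TTheory GRing.Theory Num.Theory.
Local Open Scope ring_scope.

Definition Cplx : fieldType := complex Rdefinitions.R.

Section PowerSeries.
Variable B : finType.

(* The indeterminates b_{i,j} = b_{j,i}, i <> j, indexed by the 2-element
   subsets {i,j} of B. *)
Definition pvar := {e : {set B} | #|e| == 2%N}.

Definition monom := {ffun pvar -> nat}.
Definition mon0 : monom := [ffun => 0%N].
Definition mdeg (m : monom) : nat := (\sum_(v : pvar) m v)%N.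

Definition pseries := monom -> Cplx.

Definition mdivisors (m : monom) : seq monom :=
  let N := (\max_(v : pvar) m v)%N in
  map (fun d : {ffun pvar -> 'I_N.+1} => ([ffun v => nat_of_ord (d v)] : monom))
      (enum [pred d : {ffun pvar -> 'I_N.+1} | [forall v, (d v <= m v)%N]]).

Definition msub (m m1 : monom) : monom := [ffun v => (m v - m1 v)%N].

Definition ps1 : pseries := fun m => if m == mon0 then 1 else 0.

Definition psmul (f g : pseries) : pseries :=
  fun m => \sum_(m1 <- mdivisors m) f m1 * g (msub m m1).

(* Multiplicative inverse of a series with nonzero constant term,
   by the usual recursion on the total degree (fuel n >= mdeg m). *)
Fixpoint psinv_aux (f : pseries) (n : nat) (m : monom) : Cplx :=
  if m == mon0 then (f mon0)^-1 else
  match n with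
  | 0%N => 0
  | n'.+1 => - (f mon0)^-1 *
       \sum_(m1 <- mdivisors m | m1 != mon0) f m1 * psinv_aux f n' (msub m m1)
  end.

Definition psinv (f : pseries) : pseries := fun m => psinv_aux f (mdeg m) m.

Definition psdiv (f g : pseries) : pseries := psmul f (psinv g).

Definition ps_in_vars (S : {set B}) (f : pseries) : Prop :=
  forall m : monom, (exists v : pvar, (m v != 0%N) && ~~ (val v \subset S)) ->
    f m = 0.

Definition crosses (X Y : {set B}) (v : pvar) : bool :=
  (val v :&: X != set0) && (val v :&: Y != set0).

(* Substitute b_{i,j} = 0 for all i in X, j in Y. *)
Definition cut (X Y : {set B}) (f : pseries) : pseries :=
  fun m => if [exists v, (m v != 0%N) && crosses X Y v] then 0 else f m.

End PowerSeries.

(* Every L_S is the product of the L~_C over all subsets C of S.  Cut the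
   couplings between the parts of a partition S = X + Y into nonempty sets:
   L_S becomes L_X L_Y, which is exactly the product of the factors L~_C with
   C inside X or inside Y (these contain no cut coupling, and L~_0 = 1), so
   the cut factors of the sets C meeting both X and Y multiply to 1.  By
   induction on S those with C a proper subset are constant, hence so is the
   cut of L~_S.  Thus every nonconstant monomial of L~_S contains a coupling
   across every partition of S: its support is a connected graph on S, with
   at least |S| - 1 edges. *)

From Pilot Require Import Defs.
From HB Require Import structures.
From mathcomp Require Import all_boot all_order all_algebra.
From Stdlib Require Import FunctionalExtensionality.
Import Order.TTheory GRing.Theory Num.Theory.
Set Implicit Arguments. Unset Strict Implicit. Unset Printing Implicit Defensive.
Local Open Scope ring_scope.

Section Monomials.
Variable B : finType.
Local Notation monom := (monom B).
Local Notation mon0 := (mon0 B).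

Definition mle (a m : monom) : bool := [forall v, a v <= m v]%N.

Definition madd (a b : monom) : monom := [ffun v => (a v + b v)%N].

Lemma mleP (a m : monom) : reflect (forall v, a v <= m v)%N (mle a m).
Proof. exact: forallP. Qed.

Lemma mle_trans (a b c : monom) : mle a b -> mle b c -> mle a c.
Proof. by move=> /mleP ab /mleP bc; apply/mleP => v; exact: leq_trans (ab v) (bc v). Qed.

Lemma mle0m (m : monom) : mle mon0 m.
Proof. by apply/mleP => v; rewrite ffunE. Qed.

Lemma mlem0 (a : monom) : mle a mon0 -> a = mon0.
Proof. by move/mleP => a0; apply/ffunP => v; have := a0 v; rewrite !ffunE leqn0 => /eqP. Qed.

Lemma mle_msub (m a : monom) : mle (msub m a) m.
Proof. by apply/mleP => v; rewrite ffunE leq_subr. Qed.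

Lemma msubK (m a : monom) : mle a m -> msub m (msub m a) = a.
Proof. by move/mleP => am; apply/ffunP => v; rewrite !ffunE subKn. Qed.

Lemma msubm0 (m : monom) : msub m mon0 = m.
Proof. by apply/ffunP => v; rewrite !ffunE subn0. Qed.

Lemma maddIm (a : monom) : injective (madd^~ a).
Proof. by move=> b c /ffunP bc; apply/ffunP => v; have := bc v; rewrite !ffunE => /addIn. Qed.

Lemma mdeg_msub (m a : monom) : mle a m -> (mdeg (msub m a) + mdeg a)%N = mdeg m.
Proof.
move/mleP => am; rewrite /mdeg -big_split; apply: eq_bigr => v _.
by rewrite /msub ffunE /= subnK.
Qed.

Lemma mdeg_eq0 (a : monom) : (mdeg a == 0%N) = (a == mon0).
Proof.
rewrite /mdeg sum_nat_eq0; apply/forallP/eqP => [a0 | -> v]; last by rewrite ffunE.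
by apply/ffunP => v; rewrite ffunE; apply/eqP/a0.
Qed.

Lemma mdeg_msub_lt (m a : monom) : mle a m -> a != mon0 ->
  (mdeg (msub m a) < mdeg m)%N.
Proof.
by move=> am a0; rewrite -(mdeg_msub am) -addn1 leq_add2l lt0n mdeg_eq0.
Qed.

Lemma mem_mdivisors (m a : monom) : (a \in mdivisors m) = mle a m.
Proof.
rewrite /mdivisors; apply/mapP/mleP => [[d] | am].
  by rewrite mem_enum inE => /forallP dm -> v; rewrite ffunE.
set N := (\max_(v : pvar B) m v)%N.
have aN v : (a v < N.+1)%N by rewrite ltnS (leq_trans (am v)) // leq_bigmax.
exists [ffun v => (inord (a v) : 'I_N.+1)].
  by rewrite mem_enum inE; apply/forallP => v; rewrite ffunE inordK.
by apply/ffunP => v; rewrite !ffunE inordK.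
Qed.

Lemma uniq_mdivisors (m : monom) : uniq (mdivisors m).
Proof.
rewrite map_inj_uniq ?enum_uniq // => d1 d2 /ffunP d12.
by apply/ffunP => v; apply/val_inj; have := d12 v; rewrite !ffunE.
Qed.

Section SumDivisors.
Variable R : nmodType.

Lemma sum_mdivisorsE (m : monom) (s : seq monom) (F : monom -> R) :
  uniq s -> s =i [pred a | mle a m] ->
  \sum_(a <- mdivisors m) F a = \sum_(a <- s) F a.
Proof.
move=> us sm; apply/perm_big/uniq_perm => //; first exact: uniq_mdivisors.
by move=> a; rewrite mem_mdivisors sm.
Qed.

Lemma sum_mdivisorsD1 (m : monom) (F : monom -> R) :
  \sum_(a <- mdivisors m) F a =
  F mon0 + \sum_(a <- mdivisors m | a != mon0) F a.
Proof. by rewrite (bigD1_seq mon0) ?uniq_mdivisors ?mem_mdivisors ?mle0m. Qed.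

Lemma sum_mdivisors_mon0 (F : monom -> R) :
  \sum_(a <- mdivisors mon0) F a = F mon0.
Proof.
rewrite (@sum_mdivisorsE _ [:: mon0]) ?big_seq1 // => a.
by rewrite !inE; apply/eqP/idP => [-> | /mlem0]; rewrite ?mle0m.
Qed.

Lemma sum_mdivisors_rev (m : monom) (F : monom -> R) :
  \sum_(a <- mdivisors m) F a = \sum_(a <- mdivisors m) F (msub m a).
Proof.
rewrite (@sum_mdivisorsE m (map (msub m) (mdivisors m))) ?big_map //.
  rewrite map_inj_in_uniq ?uniq_mdivisors // => a b.
  by rewrite !mem_mdivisors => am bm ab; rewrite -(msubK am) ab msubK.
move=> a; apply/mapP/idP => [[b _ ->] | am]; first exact: mle_msub.
by exists (msub m a); rewrite ?msubK // mem_mdivisors mle_msub.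
Qed.

Lemma sum_mdivisors_shift (m a : monom) (G : monom -> R) : mle a m ->
  \sum_(b <- mdivisors m | mle a b) G b =
  \sum_(c <- mdivisors (msub m a)) G (madd c a).
Proof.
move=> /mleP am; rewrite -big_filter -(big_map (madd^~ a) xpredT).
apply/perm_big/uniq_perm.
- by rewrite filter_uniq ?uniq_mdivisors.
- by rewrite map_inj_uniq ?uniq_mdivisors //; apply: maddIm.
move=> b; rewrite mem_filter mem_mdivisors; apply/andP/mapP.
  case=> /mleP ab /mleP bm; exists (msub b a).
    by rewrite mem_mdivisors; apply/mleP => v; rewrite !ffunE leq_sub2r.
  by apply/ffunP => v; rewrite /msub /madd !ffunE subnK.
case=> c; rewrite mem_mdivisors => /mleP cm ->.
split; apply/mleP => v; rewrite ffunE ?leq_addl //.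
by have := cm v; rewrite ffunE leq_subRL ?am // addnC.
Qed.

Lemma sum_mdivisors_le (m b : monom) (G : monom -> R) : mle b m ->
  \sum_(a <- mdivisors b) G a = \sum_(a <- mdivisors m | mle a b) G a.
Proof.
move=> bm; rewrite -[RHS]big_filter; apply: sum_mdivisorsE.
  by rewrite filter_uniq ?uniq_mdivisors.
move=> a; rewrite mem_filter mem_mdivisors inE andbC.
by case ab: (mle a b); rewrite ?andbF // (mle_trans ab bm).
Qed.

End SumDivisors.

End Monomials.

Section SeriesAlgebra.
Variable B : finType.
Local Notation monom := (monom B).
Local Notation mon0 := (mon0 B).
Local Notation pseries := (pseries B).
Local Notation ps1 := (@ps1 B).

Lemma psmulC (f g : pseries) : psmul f g = psmul g f.
Proof.
apply: functional_extensionality => m; rewrite /psmul [LHS]sum_mdivisors_rev.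
apply: eq_big_seq => a; rewrite mem_mdivisors => am.
by rewrite msubK // mulrC.
Qed.

Lemma psmulA (f g h : pseries) : psmul f (psmul g h) = psmul (psmul f g) h.
Proof.
apply: functional_extensionality => m; rewrite /psmul.
transitivity (\sum_(a <- mdivisors m) \sum_(b <- mdivisors m | mle a b)
                 f a * g (msub b a) * h (msub m b)).
  apply: eq_big_seq => a; rewrite mem_mdivisors => am.
  rewrite sum_mdivisors_shift // mulr_sumr; apply: eq_bigr => c _.
  rewrite mulrA; congr (_ * g _ * h _); apply/ffunP => v;
    rewrite /msub /madd !ffunE /= ?addnK // addnC subnDA //.
rewrite (exchange_big_dep xpredT) //=.
apply: eq_big_seq => b; rewrite mem_mdivisors => bm.
by rewrite mulr_suml (sum_mdivisors_le _ bm).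
Qed.

Lemma mul1ps (f : pseries) : psmul ps1 f = f.
Proof.
apply: functional_extensionality => m.
rewrite /psmul sum_mdivisorsD1 {1}/Defs.ps1 eqxx mul1r msubm0.
by rewrite big1_seq ?addr0 // => a /andP[a0 _]; rewrite /Defs.ps1 (negbTE a0) mul0r.
Qed.

Lemma mulps1 (f : pseries) : psmul f ps1 = f.
Proof. by rewrite psmulC mul1ps. Qed.

HB.instance Definition _ := Monoid.isComLaw.Build pseries ps1 (@psmul B) psmulA psmulC mul1ps.

Lemma ps1_mon0 : ps1 mon0 = 1.
Proof. by rewrite /Defs.ps1 eqxx. Qed.

Lemma psmul_mon0 (f g : pseries) : psmul f g mon0 = f mon0 * g mon0.
Proof. by rewrite /psmul sum_mdivisors_mon0 msubm0. Qed.

Lemma big_psmul_mon0 (I : finType) (P : pred I) (F : I -> pseries) :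
  (\big[@psmul B/ps1]_(i | P i) F i) mon0 = \prod_(i | P i) F i mon0.
Proof.
by apply: (big_morph (fun f : pseries => f mon0)) => [f g|]; rewrite ?psmul_mon0 ?ps1_mon0.
Qed.

Lemma big_psmul_mon0_neq0 (I : finType) (P : pred I) (F : I -> pseries) :
  (forall i, P i -> F i mon0 != 0) -> (\big[@psmul B/ps1]_(i | P i) F i) mon0 != 0.
Proof.
by move=> F0; rewrite big_psmul_mon0 prodf_seq_neq0; apply/allP => i _; apply/implyP/F0.
Qed.

Lemma psinv_auxS (f : pseries) n m : m != mon0 ->
  psinv_aux f n.+1 m =
  - (f mon0)^-1 * \sum_(a <- mdivisors m | a != mon0) f a * psinv_aux f n (msub m a).
Proof. by move=> m0; rewrite /= (negbTE m0). Qed.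

Lemma psinv_aux_fuel (f : pseries) n1 n2 m :
  (mdeg m <= n1)%N -> (mdeg m <= n2)%N -> psinv_aux f n1 m = psinv_aux f n2 m.
Proof.
elim: n1 n2 m => [|n1 IH] n2 m le1 le2.
  by move: le1; rewrite leqn0 mdeg_eq0 => /eqP ->; case: n2 {le2} => /=; rewrite eqxx.
case: n2 le2 => [|n2] le2.
  by move: le2; rewrite leqn0 mdeg_eq0 => /eqP ->; rewrite /= eqxx.
have [-> | m0] := eqVneq m mon0; first by rewrite /= eqxx.
rewrite !psinv_auxS //; apply: congr1.
rewrite big_seq_cond [RHS]big_seq_cond; apply: eq_bigr => a /andP[].
rewrite mem_mdivisors => am a0.
have lt_am := mdeg_msub_lt am a0.
by rewrite (IH n2) // -ltnS (leq_trans lt_am).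
Qed.

Lemma psinv_mon0 (f : pseries) : psinv f mon0 = (f mon0)^-1.
Proof. by rewrite /psinv; case: (mdeg mon0) => [|n] /=; rewrite eqxx. Qed.

Lemma psmulV (f : pseries) : f mon0 != 0 -> psmul f (psinv f) = ps1.
Proof.
move=> f0; apply: functional_extensionality => m.
have [->|m0] := eqVneq m mon0; first by rewrite psmul_mon0 psinv_mon0 ps1_mon0 mulfV.
rewrite /Defs.ps1 (negbTE m0) /psmul sum_mdivisorsD1 msubm0 /=.
case degm: (mdeg m) => [|n]; first by move/eqP: degm; rewrite mdeg_eq0 (negbTE m0).
rewrite {1}/psinv degm psinv_auxS // mulrA mulrN mulfV // mulN1r.
suff -> : \sum_(a <- mdivisors m | a != mon0) f a * psinv_aux f n (msub m a) =
          \sum_(a <- mdivisors m | a != mon0) f a * psinv f (msub m a) by rewrite addNr.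
rewrite big_seq_cond [RHS]big_seq_cond; apply: eq_bigr => a /andP[].
rewrite mem_mdivisors => am a0.
have lt_am := mdeg_msub_lt am a0.
by rewrite /psinv (@psinv_aux_fuel _ n (mdeg (msub m a))) // -ltnS -degm.
Qed.

Lemma psmulI (f : pseries) : f mon0 != 0 -> injective (psmul f).
Proof.
move=> f0 g h /(congr1 (psmul (psinv f))).
by rewrite !psmulA [psmul (psinv f) f]psmulC psmulV // !mul1ps.
Qed.

Lemma psmul_eq1 (f g : pseries) : g mon0 != 0 -> psmul f g = ps1 -> f = psinv g.
Proof. by move=> g0 fg1; apply: (psmulI g0); rewrite psmulC fg1 psmulV. Qed.

End SeriesAlgebra.

Section Avoidance.
Variable B : finType.
Local Notation monom := (monom B).
Local Notation mon0 := (mon0 B).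
Local Notation pseries := (pseries B).
Local Notation ps1 := (@ps1 B).

Definition mhas (q : pred (pvar B)) (m : monom) : bool := [exists v, (m v != 0%N) && q v].

(* With [q = predT] this says that [f] is a constant series. *)
Definition ps_avoid (q : pred (pvar B)) (f : pseries) : Prop :=
  forall m, mhas q m -> f m = 0.

Definition outside (S : {set B}) : pred (pvar B) := fun v => ~~ (val v \subset S).

Lemma mhasT (m : monom) : mhas predT m = (m != mon0).
Proof.
apply/idP/idP => [/existsP[v /andP[mv _]] | m0].
  by apply: contraNneq mv => ->; rewrite ffunE.
apply: contraNT m0 => /existsPn m0; apply/eqP/ffunP => v.
by have := m0 v; rewrite ffunE andbT negbK => /eqP.
Qed.

Lemma mhas_neq0 (q : pred (pvar B)) (m : monom) : mhas q m -> m != mon0.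
Proof. by rewrite -mhasT => /existsP[v /andP[mv _]]; apply/existsP; exists v; rewrite mv. Qed.

Lemma mhas_mle (q : pred (pvar B)) (a m : monom) : mle a m -> mhas q a -> mhas q m.
Proof.
move=> /mleP am /existsP[v /andP[av qv]]; apply/existsP; exists v; rewrite qv andbT.
by rewrite -lt0n (leq_trans _ (am v)) // lt0n.
Qed.

Lemma mhas_split (q : pred (pvar B)) (a m : monom) : mle a m -> mhas q m ->
  mhas q a || mhas q (msub m a).
Proof.
move=> /mleP am /existsP[v /andP[mv qv]]; have [a0 | av] := eqVneq (a v) 0%N.
  by apply/orP; right; apply/existsP; exists v; rewrite /msub ffunE a0 subn0 mv.
by apply/orP; left; apply/existsP; exists v; rewrite av.
Qed.

Lemma ps_avoidS (q q' : pred (pvar B)) (f : pseries) :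
  subpred q' q -> ps_avoid q f -> ps_avoid q' f.
Proof.
move=> q'q fq m /existsP[v /andP[mv q'v]]; apply: fq.
by apply/existsP; exists v; rewrite mv q'q.
Qed.

Lemma ps_avoid1 (q : pred (pvar B)) : ps_avoid q ps1.
Proof. by move=> m /mhas_neq0 m0; rewrite /Defs.ps1 ifN. Qed.

Lemma ps_avoidM (q : pred (pvar B)) (f g : pseries) :
  ps_avoid q f -> ps_avoid q g -> ps_avoid q (psmul f g).
Proof.
move=> fq gq m qm; rewrite /psmul big1_seq // => a /andP[_]; rewrite mem_mdivisors => am.
by case/orP: (mhas_split am qm) => [/fq | /gq] ->; rewrite ?mul0r ?mulr0.
Qed.

Lemma ps_avoid_big (q : pred (pvar B)) (I : finType) (P : pred I) (F : I -> pseries) :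
  (forall i, P i -> ps_avoid q (F i)) -> ps_avoid q (\big[@psmul B/ps1]_(i | P i) F i).
Proof. by move=> Fq; apply: big_ind => //; [apply: ps_avoid1 | apply: ps_avoidM]. Qed.

Lemma ps_avoidV (q : pred (pvar B)) (f : pseries) : ps_avoid q f -> ps_avoid q (psinv f).
Proof.
move=> fq; suff aux n m : (mdeg m <= n)%N -> mhas q m -> psinv_aux f n m = 0.
  by move=> m; apply: aux.
elim: n m => [|n IH] m degm qm; have m0 := mhas_neq0 qm.
  by move: m0; rewrite -mdeg_eq0 -leqn0 degm.
rewrite psinv_auxS // big1_seq ?mulr0 // => a /andP[a0]; rewrite mem_mdivisors => am.
case/orP: (mhas_split am qm) => [/fq -> | qma]; first by rewrite mul0r.
by rewrite IH ?mulr0 // -ltnS (leq_trans (mdeg_msub_lt am a0)).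
Qed.

Lemma ps_in_varsE (S : {set B}) (f : pseries) : ps_in_vars S f <-> ps_avoid (outside S) f.
Proof.
split=> fS m Sm; apply: fS.
  by case/existsP: Sm => v vS; exists v.
by case: Sm => v vS; apply/existsP; exists v.
Qed.

End Avoidance.

Section Cut.
Variable B : finType.
Local Notation pseries := (pseries B).
Local Notation mon0 := (mon0 B).
Local Notation ps1 := (@ps1 B).
Implicit Types (X Y S C : {set B}) (f g : pseries).

Lemma cutE X Y f m : cut X Y f m = if mhas (crosses X Y) m then 0 else f m.
Proof. by []. Qed.

Lemma ps_avoid_cut X Y f : ps_avoid (crosses X Y) (cut X Y f).
Proof. by move=> m cm; rewrite cutE cm. Qed.

Lemma cut_id X Y f : ps_avoid (crosses X Y) f -> cut X Y f = f.
Proof.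
by move=> fc; apply: functional_extensionality => m; rewrite cutE; case: ifP => // /fc.
Qed.

Lemma cut0l Y f : cut set0 Y f = f.
Proof. by apply: cut_id => m /existsP[v /andP[_ /andP[]]]; rewrite setI0 eqxx. Qed.

Lemma cut_mon0 X Y f : cut X Y f mon0 = f mon0.
Proof. by rewrite cutE; case: ifP => // /mhas_neq0; rewrite eqxx. Qed.

Lemma cutM X Y f g : cut X Y (psmul f g) = psmul (cut X Y f) (cut X Y g).
Proof.
apply: functional_extensionality => m; rewrite cutE; case: ifP => cm.
  by rewrite (ps_avoidM (ps_avoid_cut f) (ps_avoid_cut g)).
apply: eq_big_seq => a; rewrite mem_mdivisors => am.
by rewrite !cutE (contraFF (mhas_mle am) cm) (contraFF (mhas_mle (mle_msub m a)) cm).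
Qed.

Lemma cut_big X Y (I : finType) (P : pred I) (F : I -> pseries) :
  cut X Y (\big[@psmul B/ps1]_(i | P i) F i) = \big[@psmul B/ps1]_(i | P i) cut X Y (F i).
Proof.
apply: (big_morph (cut X Y)) => [f g|]; first exact: cutM.
exact/cut_id/ps_avoid1.
Qed.

Lemma cut_setI X Y S f : ps_avoid (outside S) f -> cut X Y f = cut (X :&: S) (Y :&: S) f.
Proof.
move=> fS; apply: functional_extensionality => m; rewrite !cutE.
case Sm: (mhas (outside S) m); first by rewrite fS // !if_same.
congr (if _ then _ else _); apply: eq_existsb => v; case: (boolP (m v != 0%N)) => //= mv.
have vS : val v \subset S by apply: contraFT Sm => vS; apply/existsP; exists v; rewrite mv.
by rewrite /crosses ![_ :&: S]setIC !setIA (setIidPl vS).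
Qed.

Lemma crosses_outside X Y C :
  [disjoint C & X] || [disjoint C & Y] -> subpred (crosses X Y) (outside C).
Proof.
move=> CXY v /andP[vX vY]; apply/negP => vC.
by case/orP: CXY => /disjoint_setI0 C0; [move: vX | move: vY];
  rewrite -subset0 -C0 => /negP; apply; apply: setSI.
Qed.

End Cut.

Lemma proper_ind (T : finType) (P : {set T} -> Prop) :
  (forall S : {set T}, (forall C : {set T}, C \proper S -> P C) -> P S) -> forall S, P S.
Proof.
move=> IH S; elim: {S}_.+1 {-2}S (ltnSn #|S|) => // n IHn S le_Sn.
by apply: IH => C /proper_card lt_CS; apply: IHn; apply: leq_trans lt_CS _.
Qed.

Lemma setI_neq0_subU (T : finType) (X Y C : {set T}) :
  C \subset X :|: Y -> ~~ (C \subset Y) -> X :&: C != set0.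
Proof.
move=> CXY /subsetPn[x xC xY]; apply/set0Pn; exists x.
by rewrite inE xC andbT; have := subsetP CXY x xC; rewrite inE (negbTE xY) orbF.
Qed.

Section SpanningEdges.
Variable B : finType.
Implicit Types (E : {set pvar B}) (X C : {set B}).

Definition msupp (m : monom B) : {set pvar B} := [set v | m v != 0%N].

Lemma card_msupp (m : monom B) : (#|msupp m| <= mdeg m)%N.
Proof.
rewrite -sum1_card /mdeg big_mkcond /=; apply: leq_sum => v _.
by rewrite inE; case: (m v).
Qed.

Definition edges_within E X : {set pvar B} := [set v in E | val v \subset X].

Lemma edges_within_grow E C X v : v \in E -> crosses X (C :\: X) v ->
  exists2 w, w \in C :\: X & (#|edges_within E X| < #|edges_within E (w |: X)|)%N.
Proof.
move=> vE /andP[/set0Pn[u /setIP[uv uX]] /set0Pn[w /setIP[wv wCX]]].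
exists w => //; have /setDP[wC wX] := wCX.
have uw : u != w by apply: contraNneq wX => <-.
have v_uw : val v = [set u; w].
  by apply/eqP; rewrite eq_sym eqEcard subUset !sub1set uv wv cards2 uw (eqP (valP v)).
have v_new : v \notin edges_within E X.
  by rewrite inE negb_and; apply/orP; right; apply: contra wX => /subsetP/(_ w wv).
apply: leq_trans (_ : #|v |: edges_within E X| <= _)%N; first by rewrite cardsU1 v_new.
apply/subset_leq_card/subsetP => v'; rewrite !inE => /orP[/eqP -> | /andP[v'E v'X]].
  by rewrite vE v_uw subUset !sub1set !inE eqxx uX orbT.
by rewrite v'E (subset_trans v'X) ?subsetUr.
Qed.

Lemma card_connecting_edges E C : C != set0 ->
  (forall X, X \subset C -> X != set0 -> X != C ->
     exists2 v, v \in E & crosses X (C :\: X) v) ->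
  (#|C| - 1 <= #|E|)%N.
Proof.
move=> C0 conn.
have grow j : (j < #|C|)%N ->
    exists2 X : {set B}, X \subset C & (#|X| == j.+1) && (j <= #|edges_within E X|)%N.
  elim: j => [|j IH] ltjC.
    by case/set0Pn: C0 => x xC; exists [set x]; rewrite ?sub1set ?cards1.
  have [X XC /andP[/eqP Xj jX]] := IH (ltnW ltjC).
  have X0 : X != set0 by rewrite -card_gt0 Xj.
  have XnC : X != C by apply: contraTneq ltjC => <-; rewrite Xj ltnn.
  have [v vE vX] := conn X XC X0 XnC.
  have [w /setDP[wC wX] ltXw] := edges_within_grow vE vX.
  exists (w |: X); first by rewrite subUset sub1set wC XC.
  by rewrite cardsU1 wX Xj add1n eqxx (leq_trans _ ltXw).
have ltC : (#|C|.-1 < #|C|)%N by rewrite ltn_predL card_gt0.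
have [X _ /andP[_ le_CX]] := grow _ ltC.
rewrite subn1 (leq_trans le_CX) //.
by apply/subset_leq_card/subsetP => v; rewrite inE => /andP[].
Qed.

End SpanningEdges.

Section ConnectedParts.
Variables (B : finType) (L Lt : {set B} -> pseries B).
Hypothesis L_vars : forall S : {set B}, ps_in_vars S (L S).
Hypothesis L_mon0 : forall S : {set B}, L S (mon0 B) != 0.
Hypothesis Lt_def : forall S : {set B},
  Lt S = psdiv (L S) (\big[@psmul B / @ps1 B]_(C : {set B} | C \proper S) Lt C).
Hypothesis L_cut : forall S X Y : {set B}, X :|: Y = S -> X :&: Y = set0 ->
  cut X Y (L S) = psmul (L X) (L Y).

Local Notation mon0 := (mon0 B).
Local Notation ps1 := (@ps1 B).
Local Notation "\psprod_ ( C | P ) F" :=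
  (\big[@psmul B/ps1]_(C : {set B} | P) F) (at level 36, F at level 36, C, P at level 50).

Lemma Lt_mon0_vars (S : {set B}) : Lt S mon0 != 0 /\ ps_avoid (outside S) (Lt S).
Proof.
elim/proper_ind: S => S IH.
have P0 : (\psprod_(C | C \proper S) Lt C) mon0 != 0.
  by apply: big_psmul_mon0_neq0 => C /IH[].
rewrite Lt_def /psdiv psmul_mon0 psinv_mon0 mulf_neq0 ?invr_eq0 //; split=> //.
apply: ps_avoidM; first exact/ps_in_varsE.
apply/ps_avoidV/ps_avoid_big => C /[dup] /proper_sub CS /IH[_]; apply: ps_avoidS.
by move=> v; apply: contra => vC; apply: subset_trans vC CS.
Qed.

Lemma Lt_mon0 (S : {set B}) : Lt S mon0 != 0.
Proof. by case: (Lt_mon0_vars S). Qed.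

Lemma Lt_vars (S : {set B}) : ps_avoid (outside S) (Lt S).
Proof. by case: (Lt_mon0_vars S). Qed.

Lemma L_prod_Lt (S : {set B}) : L S = \psprod_(C | C \subset S) Lt C.
Proof.
rewrite (bigD1 S) //=.
have -> : \psprod_(C | (C \subset S) && (C != S)) Lt C = \psprod_(C | C \proper S) Lt C.
  by apply: eq_bigl => C; rewrite properEneq andbC.
have P0 : (\psprod_(C | C \proper S) Lt C) mon0 != 0.
  by apply: big_psmul_mon0_neq0 => C _; apply: Lt_mon0.
by rewrite Lt_def /psdiv -psmulA [psmul (psinv _) _]psmulC psmulV // mulps1.
Qed.

Lemma L_set0 : L set0 = ps1.
Proof.
apply: (psmulI (L_mon0 set0)); rewrite mulps1.
by rewrite -(L_cut (setU0 set0) (setI0 set0)) cut0l.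
Qed.

Lemma Lt_set0 : Lt set0 = ps1.
Proof. by rewrite -L_set0 L_prod_Lt (big_pred1 set0) // => C; rewrite /= subset0. Qed.

Lemma cut_Lt_disjoint (X Y C : {set B}) :
  [disjoint C & X] || [disjoint C & Y] -> cut X Y (Lt C) = Lt C.
Proof. by move=> CXY; apply/cut_id/(ps_avoidS (crosses_outside CXY))/Lt_vars. Qed.

Lemma cut_L_prod (S X Y : {set B}) : X :|: Y = S -> X :&: Y = set0 ->
  cut X Y (L S) = psmul (psmul (L X) (L Y))
    (\psprod_(C | (C \subset S) && ~~ (C \subset X) && ~~ (C \subset Y)) cut X Y (Lt C)).
Proof.
move=> XY_S XY0; have XY : [disjoint X & Y] by rewrite -setI_eq0 XY0.
have XS : X \subset S by rewrite -XY_S subsetUl.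
have YS : Y \subset S by rewrite -XY_S subsetUr.
rewrite L_prod_Lt cut_big (bigID (fun C : {set B} => C \subset X)) /=.
have -> : \psprod_(C | (C \subset S) && (C \subset X)) cut X Y (Lt C) = L X.
  rewrite L_prod_Lt; apply: eq_big => [C | C /andP[_ CX]].
    by case CX: (C \subset X); rewrite ?andbF ?andbT // (subset_trans CX XS).
  by apply: cut_Lt_disjoint; rewrite (disjointWl CX XY) orbT.
rewrite (bigID (fun C : {set B} => C \subset Y)) /= -psmulA.
have -> // :
  \psprod_(C | (C \subset S) && ~~ (C \subset X) && (C \subset Y)) cut X Y (Lt C) = L Y.
rewrite L_prod_Lt [RHS](bigD1 set0) ?sub0set //= Lt_set0 mul1ps.
apply: eq_big => [C | C /andP[_ CY]].
  case CY: (C \subset Y); rewrite ?andbF ?andbT // (subset_trans CY YS) /=; congr negb.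
  apply/idP/eqP => [CX | ->]; last exact: sub0set.
  by apply/eqP; rewrite -subset0 -XY0 subsetI CX CY.
by apply: cut_Lt_disjoint; rewrite (disjointWl CY) // disjoint_sym.
Qed.

Lemma cut_Lt_const (S X Y : {set B}) : X :|: Y = S -> X :&: Y = set0 ->
  X != set0 -> Y != set0 -> ps_avoid predT (cut X Y (Lt S)).
Proof.
elim/proper_ind: S X Y => S IH X Y XY_S XY0 X0 Y0.
have XS : X \subset S by rewrite -XY_S subsetUl.
have YS : Y \subset S by rewrite -XY_S subsetUr.
set K := \psprod_(C | (C \subset S) && ~~ (C \subset X) && ~~ (C \subset Y) && (C != S))
           cut X Y (Lt C).
have LXY0 : psmul (L X) (L Y) mon0 != 0 by rewrite psmul_mon0 mulf_neq0.
have K0 : K mon0 != 0 by apply: big_psmul_mon0_neq0 => C _; rewrite cut_mon0 Lt_mon0.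
have SX : ~~ (S \subset X).
  by apply: contraNN Y0 => SX; rewrite -subset0 -XY0 subsetI (subset_trans YS SX) subxx.
have SY : ~~ (S \subset Y).
  by apply: contraNN X0 => SY; rewrite -subset0 -XY0 subsetI (subset_trans XS SY) subxx.
have K1 : psmul (cut X Y (Lt S)) K = ps1.
  apply/esym/(psmulI LXY0); rewrite mulps1 -[in LHS](L_cut XY_S XY0) cut_L_prod //.
  by rewrite (bigD1 S) //= subxx SX SY.
rewrite (psmul_eq1 K0 K1); apply/ps_avoidV/ps_avoid_big => C.
move=> /andP[/andP[/andP[CS CX] CY] CnS]; rewrite (cut_setI X Y (Lt_vars (S:=C))).
apply: IH; first by rewrite properEneq CnS.
- by rewrite -setIUl XY_S; apply/setIidPr.
- by rewrite setIACA XY0 set0I.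
- by apply: setI_neq0_subU CY; rewrite XY_S.
- by apply: setI_neq0_subU CX; rewrite setUC XY_S.
Qed.

Lemma Lt_support_crosses (C : {set B}) (m : monom B) : m != mon0 -> Lt C m != 0 ->
  forall X : {set B}, X \subset C -> X != set0 -> X != C ->
  exists2 v, v \in msupp m & crosses X (C :\: X) v.
Proof.
move=> m0 Ltm X XC X0 XnC.
have XY_C : X :|: (C :\: X) = C by rewrite -[RHS](setID C X) (setIidPr XC).
have XY0 : X :&: (C :\: X) = set0 by apply/setP => x; rewrite !inE andbA andbN.
have Y0 : C :\: X != set0.
  by rewrite setD_eq0; apply: contra XnC => CX; rewrite eqEsubset XC CX.
have := cut_Lt_const XY_C XY0 X0 Y0 (m := m).
rewrite mhasT cutE => /(_ m0); case: ifP => [/existsP[v /andP[mv vX]] _ | _ Lt0].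
  by exists v; rewrite ?inE.
by rewrite Lt0 eqxx in Ltm.
Qed.

End ConnectedParts.

Unset Implicit Arguments.

Theorem theorem1 (B : finType)
    (L Lt : {set B} -> pseries B)
    (HLvars : forall S : {set B}, ps_in_vars S (L S))
    (HL0 : forall S : {set B}, L S (mon0 B) != 0)
    (HLt : forall S : {set B},
       Lt S = psdiv (L S) (\big[@psmul B / @ps1 B]_(C : {set B} | C \proper S) Lt C))
    (Hfact : forall S X Y : {set B}, X :|: Y = S -> X :&: Y = set0 ->
       cut X Y (L S) = psmul (L X) (L Y)) :
  forall (C : {set B}), (1 <= #|C|)%N ->
  forall m : monom B, m != mon0 B -> (mdeg m < #|C| - 1)%N -> Lt C m = 0.
Proof.
move=> C C1 m m0 deg_m; apply/eqP; apply: contraTT deg_m => Ltm; rewrite -leqNgt.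
apply: leq_trans (card_msupp m); apply: card_connecting_edges.
  by rewrite -card_gt0.
by move=> X; apply: (Lt_support_crosses HLvars HL0 HLt Hfact m0 Ltm).
Qed.
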